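(* Let $F=\langle f_1,\ldots,f_k\rangle$ be a normalized solution to an instance $(\mathcal{T}_{initial},\mathcal{T}_{final},k)$ of Flip Distance, and let $C$ be a component of $\mathcal{D}_F$. Let $f_i$ and $f_h$, with $i<h$, be two flips in $C$. If $\phi(f_i)=\epsilon(f_h)$, or if $\phi(f_i)$ and $\epsilon(f_h)$ share a triangle $T$ in $\mathcal{T}_j$ for some $j$ with $i\le j<h$, then there is a directed path from $f_i$ to $f_h$ in $C$.
   Context: A triangulation of a finite point set $\mathcal{P}$ in the plane is a partition of the convex hull of $\mathcal{P}$ into triangles whose vertex set is $\mathcal{P}$. For an interior edge $e$ of a triangulation $\mathcal{T}$, the quadrilateral associated with $e$ is the union of the two triangles of $\mathcal{T}$ sharing $e$. A flip $f$ with underlying edge $\epsilon(f)=e$ is admissible in $\mathcal{T}$ if $e\in\mathcal{T}$ and its associated quadrilateral is convex; performing it replaces $e$ by the other diagonal $\phi(f)$ of that quadrilateral. Two distinct edges share a triangle in $\mathcal{T}$ if they are edges of the same triangle of $\mathcal{T}$. A sequence $F=\langle f_1,\ldots,f_r\rangle$ is valid with respect to $\mathcal{T}$ if there are triangulations $\mathcal{T}_0=\mathcal{T},\mathcal{T}_1,\ldots,\mathcal{T}_r$ such that $f_i$ is admissible in $\mathcal{T}_{i-1}$ and performing it yields $\mathcal{T}_i$; then we write $\mathcal{T}\xrightarrow{F}\mathcal{T}_r$. Flips in a sequence are distinct objects even if they have the same underlying edge. For $1\le i<j\le r$, flip $f_j$ is adjacent to $f_i$ (written $f_i\to f_j$)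 if (1) either $\phi(f_i)=\epsilon(f_j)$ or $\phi(f_i)$ and $\epsilon(f_j)$ share a triangle in $\mathcal{T}_{j-1}$, and (2) there is no $p$ with $i<p<j$ and $\epsilon(f_p)=\phi(f_i)$. $\mathcal{D}_F$ is the directed acyclic graph whose nodes are the flips of $F$ and whose arcs are the pairs $f_i\to f_j$; a component of it is a weakly connected component. The flip distance between two triangulations is the minimum length of a valid sequence transforming one into the other. An instance $(\mathcal{T}_{initial},\mathcal{T}_{final},k)$ of Flip Distance consists of two triangulations of $\mathcal{P}$ and $k\in\mathbb{N}$; a solution is a valid sequence $F$ of length $k$ with $\mathcal{T}_{initial}\xrightarrow{F}\mathcal{T}_{final}$, where $k$ is the flip distance between them. For a solution $F=\langle f_1,\ldots,f_k\rangle$, $\mathcal{T}_j$ denotes the outcome of applying $\langle f_1,\ldots,f_j\rangle$ to $\mathcal{T}_{initial}$. A changed edge is an edge of $\mathcal{T}_{initial}$ not in $\mathcal{T}_{final}$; a component of $\mathcal{D}_F$ is essential if it contains a flip whose underlying edge is a changed edge. A solution $F$ is normalized if every component of $\mathcal{D}_F$ is essential and the flips of each component of $\mathcal{D}_F$ appear as a consecutive block in $F$. *)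

From HB Require Import structures.
From mathcomp Require Import all_boot all_order all_algebra.
From mathcomp Require Import reals.
Set Implicit Arguments. Unset Strict Implicit. Unset Printing Implicit Defensive.
Import Order.TTheory GRing.Theory Num.Theory.
Local Open Scope ring_scope.

Section Geometry.
Variables (R : realType) (n : nat) (p : 'I_n -> 'rV[R]_2).

Definition in_hull (S : {set 'I_n}) (x : 'rV[R]_2) : Prop :=
  exists w : 'I_n -> R,
    [/\ forall i, 0 <= w i, forall i, i \notin S -> w i = 0,
        \sum_(i < n) w i = 1 & \sum_(i < n) w i *: p i = x].

Definition in_open_simplex (S : {set 'I_n}) (x : 'rV[R]_2) : Prop :=
  exists w : 'I_n -> R,
    [/\ forall i, i \in S -> 0 < w i, forall i, i \notin S -> w i = 0,
        \sum_(i < n) w i = 1 & \sum_(i < n) w i *: p i = x].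

Definition aff_indep (S : {set 'I_n}) : Prop :=
  forall w : 'I_n -> R, (forall i, i \notin S -> w i = 0) ->
    \sum_(i < n) w i = 0 -> \sum_(i < n) w i *: p i = 0 -> forall i, w i = 0.

Definition convex_set (A : 'rV[R]_2 -> Prop) : Prop :=
  forall x y, A x -> A y -> forall t : R, 0 <= t <= 1 ->
    A (t *: x + (1 - t) *: y).

Definition is_triangulation (T : {set {set 'I_n}}) : Prop :=
  [/\
      forall t, t \in T -> #|t| = 3 /\ aff_indep t,
      forall i, exists2 t, t \in T & i \in t,
      forall t i, t \in T -> i \notin t -> ~ in_hull t (p i),
      forall t1 t2 x, t1 \in T -> t2 \in T -> t1 != t2 ->
        in_open_simplex t1 x -> in_open_simplex t2 x -> False
    &
      forall x, in_hull setT x <-> exists2 t, t \in T & in_hull t x].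

(* A flip is recorded by the pair (underlying edge epsilon, new edge phi). *)
Definition flip := ({set 'I_n} * {set 'I_n})%type.
Definition eps (f : flip) := f.1.
Definition phi (f : flip) := f.2.

Definition flip_step (T : {set {set 'I_n}}) (f : flip) (T' : {set {set 'I_n}})
  : Prop :=
  exists a b c d : 'I_n,
    [/\ a != b, c != d, eps f = [set a; b] & phi f = [set c; d]] /\
    [/\ c \notin [set a; b], d \notin [set a; b],
         [set a; b; c] \in T & [set a; b; d] \in T] /\
    convex_set (fun x => in_hull [set a; b; c] x \/ in_hull [set a; b; d] x) /\
    T' = ((T :\ [set a; b; c]) :\ [set a; b; d])
           :|: [set [set a; c; d]; [set b; c; d]].

Definition dflip : flip := (set0, set0).

(* Ts i = triangulation after the first i flips of F *)
Definition valid_seq (T : {set {set 'I_n}}) (F : seq flip)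
  (Ts : nat -> {set {set 'I_n}}) : Prop :=
  [/\ Ts 0%N = T,
      forall i, (i <= size F)%N -> is_triangulation (Ts i)
    & forall i, (i < size F)%N -> flip_step (Ts i) (nth dflip F i) (Ts i.+1)].

Definition is_edge (T : {set {set 'I_n}}) (e : {set 'I_n}) : bool :=
  (#|e| == 2)%N && [exists t in T, e \subset t].

Definition share_triangle (T : {set {set 'I_n}}) (e1 e2 : {set 'I_n}) : bool :=
  [&& e1 != e2, (#|e1| == 2)%N, (#|e2| == 2)%N &
      [exists t in T, (e1 \subset t) && (e2 \subset t)]].

(* Arcs of D_F (0-based indices; flip a is applied to Ts a) *)
Definition adj (F : seq flip) (Ts : nat -> {set {set 'I_n}})
  (a b : 'I_(size F)) : bool :=
  [&& (a < b)%N,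
      (phi (nth dflip F a) == eps (nth dflip F b))
        || share_triangle (Ts b) (phi (nth dflip F a)) (eps (nth dflip F b))
    & [forall q : 'I_(size F),
        ~~ (((a < q < b)%N) && (eps (nth dflip F q) == phi (nth dflip F a)))]].

Arguments adj : clear implicits.

Definition wadj (F : seq flip) (Ts : nat -> {set {set 'I_n}}) (a b : 'I_(size F)) : bool := adj F Ts a b || adj F Ts b a.

Arguments wadj : clear implicits.

Definition is_component (F : seq flip) (Ts : nat -> {set {set 'I_n}}) (C : {set 'I_(size F)}) : Prop :=
  exists x0, C = [set x | connect (wadj F Ts) x0 x].

Arguments is_component : clear implicits.

Definition changed_edge (Tinit Tfinal : {set {set 'I_n}}) (e : {set 'I_n}) :=
  is_edge Tinit e && ~~ is_edge Tfinal e.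

Definition solution (Tinit Tfinal : {set {set 'I_n}}) (k : nat)
  (F : seq flip) (Ts : nat -> {set {set 'I_n}}) : Prop :=
  [/\ valid_seq Tinit F Ts, Ts (size F) = Tfinal, size F = k &
      forall F' Ts', valid_seq Tinit F' Ts' -> Ts' (size F') = Tfinal ->
        (k <= size F')%N].

Definition normalized_solution (Tinit Tfinal : {set {set 'I_n}}) (k : nat)
  (F : seq flip) (Ts : nat -> {set {set 'I_n}}) : Prop :=
  solution Tinit Tfinal k F Ts /\
  forall C, is_component F Ts C ->
    (exists2 x, x \in C & changed_edge Tinit Tfinal (eps (nth dflip F x))) /\
    (forall x y z : 'I_(size F), (x <= y <= z)%N -> x \in C -> z \in C -> y \in C).

End Geometry.
Arguments adj {n} F Ts a b.
Arguments wadj {n} F Ts a b.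
Arguments is_component {n} F Ts C.

(* Follow a generic point [y] (on no line through two points of P) through the
   triangulations.  Call a triangle of T_t witnessed if it contains the new edge
   phi(f_r) of a flip f_r reachable from f_i in D_F that no flip before step t
   has removed again.  If the triangle containing [y] is witnessed and f_t
   destroys it, then eps(f_t) is an edge of it, so f_r -> f_t and f_t becomes
   reachable; afterwards [y] lies in one of the two new triangles, which contain
   phi(f_t).  Starting from [y] in a new triangle of f_i, the invariant reaches
   step j with [y] inside the triangle shared by phi(f_i) and eps(f_h); a second
   generic point of that triangle, chosen inside a triangle on eps(f_h), carries
   it to step h, where f_h destroys that triangle.  The path stays in C because
   C is weakly connected. *)

From HB Require Import structures.
From mathcomp Require Import all_boot all_order all_algebra.
From mathcomp Require Import reals.
From mathcomp Require Import ring lra.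
Set Implicit Arguments. Unset Strict Implicit. Unset Printing Implicit Defensive.
Import Order.TTheory GRing.Theory Num.Theory.

Section FiniteSets.
Variable T : finType.

Lemma card_set3_uniq (u v x : T) :
  #|[set u; v; x]| = 3 -> [/\ u != v, x != u & x != v].
Proof.
rewrite setUC cardsU1 cards2 !inE.
by case: (eqVneq u v); case: (eqVneq x u); case: (eqVneq x v).
Qed.

Lemma card_set3_split (t : {set T}) (u v : T) : #|t| = 3 -> u \in t -> v \in t ->
  u != v -> exists2 x, t = [set u; v; x] & #|[set u; v; x]| = 3.
Proof.
move=> ht ut vt uv.
have E : t :&: [set u; v] = [set u; v].
  by apply/setIidPr; apply/subsetP => w; rewrite !inE => /orP[]/eqP->.
have : #|t :\: [set u; v]| == 1 by rewrite cardsD E cards2 uv ht.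
case/cards1P => x Ex.
have Et : t = [set u; v; x] by rewrite -(setID t [set u; v]) E Ex.
by exists x; rewrite -Et.
Qed.

Lemma card_set3P (t : {set T}) : #|t| = 3 -> exists u v x, t = [set u; v; x].
Proof.
move=> ht; have /card_gt0P[u ut] : 0 < #|t| by rewrite ht.
have /card_gt0P[v] : 0 < #|t :\ u|.
  by move: ht; rewrite (cardsD1 u t) ut add1n => -[->].
rewrite !inE => /andP[vu vt].
have [x Ex _] := card_set3_split ht vt ut vu; by exists v, u, x.
Qed.

Lemma set3_rot (a b c : T) : [set a; b; c] = [set b; c; a].
Proof.
by apply/setP => w; rewrite !inE; case: (w == a); case: (w == b); case: (w == c).
Qed.

Lemma set2_sub_set3 (a b c : T) : [set a; b] \subset [set a; b; c].
Proof. by apply/subsetP => w; rewrite !inE => ->. Qed.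

Lemma exists_avoiding (D K : finType) (V : eqType) (c : D -> V) (f : K -> V) :
  injective c -> #|K| < #|D| -> exists d, forall k, c d != f k.
Proof.
move=> c_inj ltKD.
case: (boolP [exists d, [forall k, c d != f k]]) => [/existsP[d /forallP]|]; first by exists d.
rewrite negb_exists => /forallP none.
have hit d : exists k, c d == f k.
  by have := none d; rewrite negb_forall => /existsP[k]; rewrite negbK; exists k.
pose g d := xchoose (hit d).
have g_inj : injective g.
  move=> d1 d2 e; apply: c_inj.
  by rewrite (eqP (xchooseP (hit d1))) (eqP (xchooseP (hit d2))) -/(g d1) e.
by have := leq_card g g_inj; rewrite leqNgt ltKD.
Qed.

End FiniteSets.

Section Plane.
Local Open Scope ring_scope.
Variable R : realType.
Implicit Types a b c d m w : 'rV[R]_2.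

Lemma row2P a b : a 0 0 = b 0 0 -> a 0 1 = b 0 1 -> a = b.
Proof.
move=> h0 h1; apply/rowP => -[[|[|k]] Hk] //.
- by have -> : Ordinal Hk = 0 by apply: val_inj.
- by have -> : Ordinal Hk = 1 by apply: val_inj.
Qed.

Definition cross a b : R := a 0 0 * b 0 1 - a 0 1 * b 0 0.

Lemma crossDr a b c : cross a (b + c) = cross a b + cross a c.
Proof. by rewrite /cross !mxE; ring. Qed.

Lemma crossZr a (t : R) b : cross a (t *: b) = t * cross a b.
Proof. by rewrite /cross !mxE; ring. Qed.

Lemma cross_degenerate a b c : cross b c != 0 ->
  cross a b = 0 -> cross a c = 0 -> a = 0.
Proof.
move=> bc ab ac; apply: row2P; rewrite mxE; apply: (mulIf bc); rewrite mul0r.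
- transitivity (b 0 0 * cross a c - c 0 0 * cross a b); first by rewrite /cross; ring.
  by rewrite ab ac; ring.
- transitivity (b 0 1 * cross a c - c 0 1 * cross a b); first by rewrite /cross; ring.
  by rewrite ab ac; ring.
Qed.

Lemma cross_decompose a d b : cross d b != 0 ->
  a = (cross a b / cross d b) *: d + (cross d a / cross d b) *: b.
Proof. by move=> db; apply: row2P; rewrite !mxE /cross; field. Qed.

Lemma exists_scalar_avoiding (K : finType) (f : K -> R) (a b : R) : a < b ->
  exists t : R, [/\ a < t, t < b & forall k, t != f k].
Proof.
move=> ab; pose N := #|K|.+1.
pose c (m : 'I_N) := a + (b - a) * ((m%:R + 1) / (N%:R + 1)).
have N1 : (N%:R + 1 : R) != 0 by rewrite natr1 pnatr_eq0.
have ba : b - a != 0 by rewrite subr_eq0 gt_eqF.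
have c_inj : injective c.
  move=> m1 m2 /addrI /(mulfI ba) /(mulIf (invr_neq0 N1)) /addIr /eqP.
  by rewrite eqr_nat => /eqP /val_inj.
have [m avoid] : exists m : 'I_N, forall k, c m != f k.
  by apply: exists_avoiding c_inj _; rewrite card_ord.
have q0 : 0 < (m%:R + 1) / (N%:R + 1) :> R by rewrite divr_gt0 // ltr_wpDl.
have q1 : (m%:R + 1) / (N%:R + 1) < 1 :> R.
  by rewrite ltr_pdivrMr ?ltr_wpDl // mul1r ltrD2r ltr_nat.
exists (c m); split => //; rewrite /c; nra.
Qed.

Lemma same_sign_pair (a b c : R) : a != 0 -> b != 0 -> c != 0 ->
  [|| 0 < a * b, 0 < a * c | 0 < b * c].
Proof.
move=> a0 b0 c0; apply/negPn/negP; rewrite !negb_or -!leNgt.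
case/and3P => ab ac bc.
have : 0 < (a * b * c) ^+ 2 by rewrite exprn_even_gt0 //= !mulf_neq0.
rewrite (_ : (a * b * c) ^+ 2 = a * b * (a * c) * (b * c)); last by ring.
by rewrite ltNge mulr_ge0_le0 // mulr_le0.
Qed.

End Plane.

Section PointSet.
Local Open Scope ring_scope.
Variables (R : realType) (n : nat) (p : 'I_n -> 'rV[R]_2).
Hypothesis p_inj : injective p.

Definition orient (u v : 'I_n) (y : 'rV[R]_2) := cross (p v - p u) (y - p u).

Definition generic (y : 'rV[R]_2) := forall k l : 'I_n, k != l -> orient k l y != 0.

Lemma sum_set3 (V : nmodType) (G : 'I_n -> V) (u v w : 'I_n) :
  #|[set u; v; w]| = 3%N -> (forall i, i \notin [set u; v; w] -> G i = 0) ->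
  \sum_(i < n) G i = G u + G v + G w.
Proof.
case/card_set3_uniq => uv wu wv G0.
rewrite (bigD1 u) //= (bigD1 v) /=; last by rewrite eq_sym uv.
rewrite (bigD1 w) /=; last by rewrite wu wv.
rewrite big1 ?addr0 ?addrA // => i /andP[/andP[iu iv] iw].
by apply: G0; rewrite !inE (negbTE iu) (negbTE iv) (negbTE iw).
Qed.

Lemma open_simplex3 (u v w : 'I_n) (a b c : R) (y : 'rV[R]_2) :
  #|[set u; v; w]| = 3%N -> 0 < a -> 0 < b -> 0 < c -> a + b + c = 1 ->
  y = a *: p u + b *: p v + c *: p w -> in_open_simplex p [set u; v; w] y.
Proof.
move=> uvw a0 b0 c0 abc ->; have [uv wu wv] := card_set3_uniq uvw.
pose W i := if i == u then a else if i == v then b else if i == w then c else 0.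
have Wz i : i \notin [set u; v; w] -> W i = 0 by rewrite !inE /W; do 3!case: eqP.
have Wu : W u = a by rewrite /W eqxx.
have Wv : W v = b by rewrite /W eqxx eq_sym (negbTE uv).
have Ww : W w = c by rewrite /W eqxx (negbTE wu) (negbTE wv).
exists W; split => //.
- by move=> i; rewrite !inE => /orP[/orP[]|]/eqP->; rewrite ?Wu ?Wv ?Ww.
- by rewrite (sum_set3 uvw Wz) Wu Wv Ww.
- rewrite (sum_set3 (G := fun i => W i *: p i) uvw) ?Wu ?Wv ?Ww //.
  by move=> i /Wz ->; rewrite scale0r.
Qed.

Lemma generic_weight_neq0 (y : 'rV[R]_2) (u v w : 'I_n) (a b c : R) :
  generic y -> v != w -> a + b + c = 1 ->
  y = a *: p u + b *: p v + c *: p w -> a != 0.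
Proof.
move=> g vw abc ey; apply/eqP => a0; move: (g v w vw).
rewrite ey /orient /cross !mxE a0 (_ : b = 1 - c); last by rewrite -abc a0; ring.
by apply/negP; rewrite negbK; apply/eqP; ring.
Qed.

Lemma generic_hull_open (u v w : 'I_n) (y : 'rV[R]_2) : generic y ->
  #|[set u; v; w]| = 3%N ->
  in_hull p [set u; v; w] y -> in_open_simplex p [set u; v; w] y.
Proof.
move=> g uvw [W [W0 Wz W1 Wy]]; have [uv wu wv] := card_set3_uniq uvw.
have W3 : W u + W v + W w = 1 by rewrite -W1 (sum_set3 uvw Wz).
have Wy3 : y = W u *: p u + W v *: p v + W w *: p w.
  rewrite -Wy (sum_set3 (G := fun i => W i *: p i) uvw) // => i /Wz ->.
  by rewrite scale0r.
exists W; split => // i; rewrite lt0r W0 andbT !inE => /orP[/orP[]|]/eqP->.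
- by apply: (generic_weight_neq0 g _ W3 Wy3); rewrite eq_sym.
- apply: (generic_weight_neq0 (u := v) (v := u) (w := w) (b := W u) (c := W w)
    g _ _ (_ : y = _)).
  + by rewrite eq_sym.
  + by rewrite -W3 (addrC (W v)).
  + by rewrite Wy3 (addrC (W u *: _)).
- apply: (generic_weight_neq0 (u := w) (v := u) (w := v) (b := W u) (c := W v)
    g uv _ (_ : y = _)).
  + by rewrite -W3; ring.
  + by rewrite Wy3 [LHS]addrC addrA.
Qed.

Lemma aff_indep_orient (u v x : 'I_n) : #|[set u; v; x]| = 3%N ->
  aff_indep p [set u; v; x] -> orient u v (p x) != 0.
Proof.
move=> uvx indep; have [uv xu xv] := card_set3_uniq uvx.
apply/eqP; rewrite /orient /cross !mxE.
set d0 := p v 0 0 - p u 0 0; set d1 := p v 0 1 - p u 0 1.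
set a0 := p x 0 0 - p u 0 0; set a1 := p x 0 1 - p u 0 1 => ad0.
(* the affine dependence  (ad - dd) p u - ad p v + dd p x  exists as soon as
   p x - p u is parallel to p v - p u *)
pose dd := d0 ^+ 2 + d1 ^+ 2; pose ad := a0 * d0 + a1 * d1.
pose W i := if i == u then ad - dd else if i == v then - ad
            else if i == x then dd else 0.
have Wz i : i \notin [set u; v; x] -> W i = 0 by rewrite !inE /W; do 3!case: eqP.
have Wu : W u = ad - dd by rewrite /W eqxx.
have Wv : W v = - ad by rewrite /W eqxx eq_sym (negbTE uv).
have Wx : W x = dd by rewrite /W eqxx (negbTE xu) (negbTE xv).
have sumW : \sum_(i < n) W i = 0 by rewrite (sum_set3 uvx Wz) Wu Wv Wx; ring.
have combW : \sum_(i < n) W i *: p i = 0.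
  rewrite (sum_set3 (G := fun i => W i *: p i) uvx); last first.
    by move=> i /Wz ->; rewrite scale0r.
  apply: row2P; rewrite !mxE Wu Wv Wx.
  - transitivity (- d1 * (d0 * a1 - d1 * a0)); last by rewrite ad0 mulr0.
    by rewrite /ad /dd /d0 /d1 /a0 /a1; ring.
  - transitivity (d0 * (d0 * a1 - d1 * a0)); last by rewrite ad0 mulr0.
    by rewrite /ad /dd /d0 /d1 /a0 /a1; ring.
have /eqP : dd = 0 by rewrite -Wx (indep W Wz sumW combW).
rewrite paddr_eq0 ?sqr_ge0 // !sqrf_eq0 !subr_eq0 => /andP[/eqP e0 /eqP e1].
by move: uv; rewrite (p_inj (row2P e0 e1)) eqxx.
Qed.

Lemma orient_neq0_card (u v x : 'I_n) : orient u v (p x) != 0 ->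
  #|[set u; v; x]| = 3%N.
Proof.
rewrite setUC cardsU1 cards2 !inE /orient /cross !mxE.
case: (eqVneq u v) => [->|_]; first by rewrite !subrr !mul0r subrr eqxx.
case: (eqVneq x u) => [->|_]; first by rewrite !subrr !mulr0 subrr eqxx.
case: (eqVneq x v) => [->|_] //; by rewrite mulrC subrr eqxx.
Qed.

Lemma exists_transversal_direction (d a : 'rV[R]_2) : cross d a != 0 ->
  exists e : R, [/\ 0 < e, e < 1 &
    forall k l : 'I_n, k != l -> cross (p l - p k) (a + e *: d) != 0].
Proof.
move=> da.
have [e [e0 e1 avoid]] := exists_scalar_avoiding
  (fun kl : 'I_n * 'I_n => - cross (p kl.2 - p kl.1) a / cross (p kl.2 - p kl.1) d) ltr01.
exists e; split => // k l kl; rewrite crossDr crossZr.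
have L0 : p l - p k != 0 by rewrite subr_eq0; apply: contra kl => /eqP/p_inj->.
case: (eqVneq (cross (p l - p k) d) 0) => [Ld|Ld].
  rewrite Ld mulr0 addr0; apply: contra L0 => /eqP La; apply/eqP.
  exact: cross_degenerate da Ld La.
apply: contra (avoid (k, l)) => /eqP Lz; apply/eqP => /=.
by apply: (mulIf Ld); rewrite divfK //; lra.
Qed.

Lemma exists_generic_on_ray (m w : 'rV[R]_2) (t0 : R) : 0 < t0 ->
  (forall k l : 'I_n, k != l -> cross (p l - p k) w != 0) ->
  exists t : R, [/\ 0 < t, t < t0 & generic (m + t *: w)].
Proof.
move=> t0_gt0 transv.
have [t [t_gt0 tt0 avoid]] := exists_scalar_avoiding
  (fun kl : 'I_n * 'I_n =>
     - cross (p kl.2 - p kl.1) (m - p kl.1) / cross (p kl.2 - p kl.1) w) t0_gt0.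
exists t; split => // k l kl; rewrite /orient addrAC crossDr crossZr.
apply: contra (avoid (k, l)) => /eqP Lz; apply/eqP => /=.
by apply: (mulIf (transv k l kl)); rewrite divfK ?transv //; lra.
Qed.

(* The point is taken near the midpoint of [u v], pushed towards [x] along a
   direction transversal to every line through two points of the set. *)
Lemma exists_generic_same_side (u v x z : 'I_n) :
  0 < orient u v (p x) * orient u v (p z) ->
  exists y, [/\ generic y, in_open_simplex p [set u; v; x] y
                         & in_open_simplex p [set u; v; z] y].
Proof.
move=> hs.
have ox : orient u v (p x) != 0 by apply: contraTneq hs => ->; rewrite mul0r ltxx.
have oz : orient u v (p z) != 0 by apply: contraTneq hs => ->; rewrite mulr0 ltxx.
move: hs ox oz (orient_neq0_card ox) (orient_neq0_card oz); rewrite /orient.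
set D := p v - p u; set A := p x - p u; set B := p z - p u.
move=> hs ox oz uvx uvz.
have [e [e_gt0 e_lt1 transv]] := exists_transversal_direction ox.
set r1 := cross A B / cross D B; set r2 := cross D A / cross D B.
have Adec : A = r1 *: D + r2 *: B := cross_decompose A oz.
have r2_gt0 : 0 < r2.
  have -> : r2 = cross D A * cross D B / (cross D B) ^+ 2.
    by rewrite /r2 expr2 -mulf_div divff // mulr1.
  by rewrite divr_gt0 // exprn_even_gt0.
pose M := `|r1| + r2 + 1.
have M_gt0 : 0 < M by rewrite /M; have := normr_ge0 r1; lra.
have t0_gt0 : 0 < (8 * M)^-1 by rewrite invr_gt0 mulr_gt0.
have [t [t_gt0 tM generic_y]] := exists_generic_on_ray (2^-1 *: D + p u) t0_gt0 transv.
have {}tM : t * M < 8^-1.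
  by move: tM; rewrite -[(8 * M)^-1]mul1r ltr_pdivlMr ?mulr_gt0 //; lra.
have te : 0 < t * e < t by rewrite mulr_gt0 // gtr_pMr.
have tr1 : - (t * `|r1|) <= t * r1 <= t * `|r1|.
  rewrite -mulrN !ler_pM2l // ler_norm andbT.
  by rewrite lerNl -normrN ler_norm.
have tr2 : 0 < t * r2 by rewrite mulr_gt0.
have tM' : t * M = t * `|r1| + t * r2 + t by rewrite /M; ring.
exists (2^-1 *: D + p u + t *: (A + e *: D)); split => //.
- apply: (open_simplex3 (a := 2^-1 - t - t * e) (b := 2^-1 + t * e) (c := t));
    [exact: uvx | lra | lra | lra | lra |].
  by apply: row2P; rewrite /D /A !mxE; field.
- apply: (open_simplex3 (a := 2^-1 - t * r1 - t * e - t * r2)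
                      (b := 2^-1 + t * r1 + t * e) (c := t * r2));
    [exact: uvz | lra | lra | lra | lra |].
  by rewrite Adec; apply: row2P; rewrite /D /B !mxE; field.
Qed.

Lemma open_simplex_hullT S (y : 'rV[R]_2) :
  in_open_simplex p S y -> in_hull p setT y.
Proof.
case=> W [W_gt0 Wz W1 Wy]; exists W; split => // i; last by rewrite inE.
by case: (boolP (i \in S)) => [/W_gt0/ltW|/Wz ->].
Qed.

Section Triangulation.
Variable T : {set {set 'I_n}}.
Hypothesis T_tri : is_triangulation p T.

Lemma open_simplex_unique D1 D2 y : D1 \in T -> D2 \in T ->
  in_open_simplex p D1 y -> in_open_simplex p D2 y -> D1 = D2.
Proof.
case: T_tri => _ _ _ disj _ D1T D2T o1 o2.
by case: (eqVneq D1 D2) => // ne; case: (disj _ _ _ D1T D2T ne o1 o2).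
Qed.

Lemma triangulation_open_cover y : generic y -> in_hull p setT y ->
  exists2 D, D \in T & in_open_simplex p D y.
Proof.
case: T_tri => tri _ _ _ cover g /cover[D DT hD]; exists D => //.
have [card3 _] := tri D DT; have [u [v [x ED]]] := card_set3P card3.
by rewrite ED in card3 hD *; apply: generic_hull_open.
Qed.

(* Of the two triangles on an edge [u v], one lies on the same side of the
   line [u v] as any given triangle [X] containing the edge, and sharing that
   side makes their interiors meet at a generic point. *)
Lemma exists_generic_near_edge T' X (u v x1 x2 : 'I_n) :
  is_triangulation p T' -> X \in T' -> u \in X -> v \in X -> x1 != x2 ->
  [set u; v; x1] \in T -> [set u; v; x2] \in T ->
  exists y, [/\ generic y, in_open_simplex p X y &
    in_open_simplex p [set u; v; x1] y \/ in_open_simplex p [set u; v; x2] y].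
Proof.
move=> [tri' _ _ _ _] XT' uX vX x12 T1 T2.
have [tri _ _ _ _] := T_tri.
have [uvx1 ind1] := tri _ T1; have [uvx2 ind2] := tri _ T2.
have [uv x1u x1v] := card_set3_uniq uvx1.
have [cardX indX] := tri' X XT'.
have [z EX uvz] := card_set3_split cardX uX vX uv; rewrite EX in indX *.
have o1 := aff_indep_orient uvx1 ind1; have o2 := aff_indep_orient uvx2 ind2.
have oz := aff_indep_orient uvz indX.
case/or3P: (same_sign_pair o1 o2 oz) => hs.
- have [y [_ y1 y2]] := exists_generic_same_side hs.
  move: (open_simplex_unique T1 T2 y1 y2) => /setP/(_ x1).
  by rewrite !inE eqxx orbT (negbTE x1u) (negbTE x1v) (negbTE x12).
- rewrite mulrC in hs; have [y [g yz y1]] := exists_generic_same_side hs.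
  by exists y; split => //; left.
- rewrite mulrC in hs; have [y [g yz y2]] := exists_generic_same_side hs.
  by exists y; split => //; right.
Qed.

Lemma edge_triangles (u v x1 x2 : 'I_n) D : x1 != x2 ->
  [set u; v; x1] \in T -> [set u; v; x2] \in T -> D \in T -> u \in D -> v \in D ->
  D = [set u; v; x1] \/ D = [set u; v; x2].
Proof.
move=> x12 T1 T2 DT uD vD.
have [y [_ oD [o1|o2]]] := exists_generic_near_edge T_tri DT uD vD x12 T1 T2.
- by left; apply: open_simplex_unique oD o1.
- by right; apply: open_simplex_unique oD o2.
Qed.

End Triangulation.

Section FlipStep.
Variables (T T' : {set {set 'I_n}}) (f : flip n).
Hypothesis step : flip_step p T f T'.

Lemma flip_step_card : #|eps f| = 2%N /\ #|phi f| = 2%N.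
Proof. by case: step => [a [b [c [d [[ab cd -> ->] _]]]]]; rewrite !cards2 ab cd. Qed.

Lemma flip_step_old_edge : exists a b x1 x2, [/\ eps f = [set a; b], x1 != x2,
  [set a; b; x1] \in T & [set a; b; x2] \in T].
Proof. by case: step => [a [b [c [d [[_ cd ea _] [[_ _ Tc Td] _]]]]]]; exists a, b, c, d. Qed.

Lemma flip_step_new_edge : exists c d x1 x2, [/\ phi f = [set c; d], x1 != x2,
  [set c; d; x1] \in T' & [set c; d; x2] \in T'].
Proof.
case: step => [a [b [c [d [[ab _ _ pc] [_ [_ ->]]]]]]]; exists c, d, a, b.
by rewrite -!(set3_rot _ c d) !inE !eqxx !orbT.
Qed.

Lemma flip_step_removed D : D \in T -> D \notin T' -> eps f \subset D.
Proof.
case: step => [a [b [c [d [[_ _ -> _] [_ [_ ->]]]]]]] DT.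
case: (eqVneq D [set a; b; c]) => [-> _|Dc]; first exact: set2_sub_set3.
case: (eqVneq D [set a; b; d]) => [-> _|Dd]; first exact: set2_sub_set3.
by rewrite !inE Dc Dd DT.
Qed.

Lemma flip_step_added D : D \in T' -> D \notin T -> phi f \subset D.
Proof.
case: step => [a [b [c [d [[_ _ _ ->] [_ [_ ->]]]]]]].
rewrite !inE => /orP[/andP[_ /andP[_ ->]] //|/orP[]/eqP-> _];
  by rewrite (set3_rot _ c d) set2_sub_set3.
Qed.

Lemma flip_step_edge_gone D : is_triangulation p T -> D \in T' -> ~~ (eps f \subset D).
Proof.
case: step => [a [b [c [d [[ab cd -> _] [[cab dab Tc Td] [_ ->]]]]]]] T_tri DT'.
apply/negP; rewrite subUset !sub1set => /andP[aD bD].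
move: DT'; rewrite !inE => /orP[/andP[Dd /andP[Dc DT]]|/orP[]/eqP ED].
- by case: (edge_triangles T_tri cd Tc Td DT aD bD) => eD; rewrite eD eqxx in Dc Dd.
- move: cab dab bD; rewrite ED !inE (eq_sym b a) (eq_sym b c) (eq_sym b d) (negbTE ab).
  by move=> /norP[_ /negbTE->] /norP[_ /negbTE->].
- move: cab dab aD; rewrite ED !inE (eq_sym a c) (eq_sym a d) (negbTE ab).
  by move=> /norP[/negbTE-> _] /norP[/negbTE-> _].
Qed.

End FlipStep.

End PointSet.

Section Reachability.
Variables (R : realType) (n : nat) (p : 'I_n -> 'rV[R]_2).
Hypothesis p_inj : injective p.
Variables (T0 : {set {set 'I_n}}) (F : seq (flip n)) (Ts : nat -> {set {set 'I_n}}).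
Hypothesis F_valid : valid_seq p T0 F Ts.
Variable i : 'I_(size F).
Local Notation N := (size F).
Local Notation fl t := (nth (dflip n) F t).

Lemma triangulation_Ts t : (t <= N)%N -> is_triangulation p (Ts t).
Proof. by case: F_valid => _ tri _; apply: tri. Qed.

Lemma flip_step_Ts t : (t < N)%N -> flip_step p (Ts t) (fl t) (Ts t.+1).
Proof. by case: F_valid => _ _ step; apply: step. Qed.

Definition reachable (r : 'I_N) := exists s, path (adj F Ts) i s /\ last i s = r.

Lemma reachable_adj (r s : 'I_N) : reachable r -> adj F Ts r s -> reachable s.
Proof.
by case=> q [pq lq] rs; exists (rcons q s); rewrite rcons_path pq lq rs last_rcons.
Qed.

(* The invariant tracked along a generic point: whichever flip destroys a
   witnessed triangle has its underlying edge on that triangle, hence is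
   adjacent to the witness. *)
Definition witnessed t (D : {set 'I_n}) := D \in Ts t /\ exists r : 'I_N,
  [/\ reachable r, (r < t)%N, phi (fl r) \subset D &
      forall q : 'I_N, (r < q < t)%N -> eps (fl q) != phi (fl r)].

Definition tracked (y : 'rV[R]_2) t :=
  forall D, D \in Ts t -> in_open_simplex p D y -> witnessed t D.

Lemma witnessed_removed (t : 'I_N) D : witnessed t D -> D \notin Ts t.+1 -> reachable t.
Proof.
case=> DT [r [rr rt rD fresh]] DT1; have step := flip_step_Ts (ltn_ord t).
apply: (reachable_adj rr); rewrite /adj rt /=; apply/andP; split.
  case: (eqVneq (phi (fl r)) (eps (fl t))) => [//|ne].
  apply/orP; right; apply/and4P; split => //.
  - by rewrite (proj2 (flip_step_card (flip_step_Ts (ltn_ord r)))).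
  - by rewrite (proj1 (flip_step_card step)).
  - by apply/existsP; exists D; rewrite DT rD (flip_step_removed step DT DT1).
apply/forallP => q; apply/negP => /andP[rqt /eqP e].
by move: (fresh q rqt); rewrite e eqxx.
Qed.

Lemma witnessed_added (t : 'I_N) D : reachable t -> D \in Ts t.+1 ->
  phi (fl t) \subset D -> witnessed t.+1 D.
Proof.
move=> rt DT tD; split => //; exists t; split => // q /andP[tq qt].
by move: (leq_ltn_trans tq qt); rewrite ltnn.
Qed.

Lemma witnessed_kept t D : (t < N)%N -> witnessed t D -> D \in Ts t.+1 ->
  witnessed t.+1 D.
Proof.
move=> tN [DT [r [rr rt rD fresh]]] DT1; split => //; exists r; split => //.
  exact: ltnW.
move=> q /andP[rq]; rewrite ltnS leq_eqVlt => /orP[/eqP qt|qt].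
  have gone := flip_step_edge_gone p_inj (flip_step_Ts tN) (triangulation_Ts (ltnW tN)) DT1.
  by apply: contraNneq gone => e; rewrite -qt e.
by apply: fresh; rewrite rq qt.
Qed.

Lemma tracked_step y t : generic p y -> (t < N)%N -> tracked y t -> tracked y t.+1.
Proof.
move=> g tN tracked_t D' D'T o'; have step := flip_step_Ts tN.
have [D DT oD] := triangulation_open_cover (triangulation_Ts (ltnW tN)) g
                    (open_simplex_hullT o').
have wD := tracked_t D DT oD.
case: (boolP (D \in Ts t.+1)) => DT1.
  by rewrite -(open_simplex_unique (triangulation_Ts tN) DT1 D'T oD o'); apply: witnessed_kept.
have D'T0 : D' \notin Ts t.
  apply: contra DT1 => D'T0.
  by rewrite (open_simplex_unique (triangulation_Ts (ltnW tN)) DT D'T0 oD o').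
apply: (witnessed_added (t := Ordinal tN)) D'T (flip_step_added step D'T D'T0).
exact: (witnessed_removed (t := Ordinal tN) wD DT1).
Qed.

Lemma tracked_later y t0 t : generic p y -> (t0 <= t <= N)%N ->
  tracked y t0 -> tracked y t.
Proof.
move=> g /andP[]; elim: t => [|t IH]; first by rewrite leqn0 => /eqP->.
rewrite leq_eqVlt => /orP[/eqP-> //|t0t tN tracked_t0].
exact: tracked_step (IH t0t (ltnW tN) tracked_t0).
Qed.

Lemma tracked_start y D : D \in Ts i.+1 -> phi (fl i) \subset D ->
  in_open_simplex p D y -> tracked y i.+1.
Proof.
move=> DT iD oD D' D'T oD'.
rewrite (open_simplex_unique (triangulation_Ts (ltn_ord i)) D'T DT oD' oD).
by apply: witnessed_added => //; exists [::].
Qed.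

Lemma reachable_of_tracked (h : 'I_N) y D : tracked y h -> D \in Ts h ->
  eps (fl h) \subset D -> in_open_simplex p D y -> reachable h.
Proof.
move=> tr DT hD oD; apply: (witnessed_removed (tr D DT oD)).
have hN := ltn_ord h; apply: contraTN hD => DT1.
exact: (flip_step_edge_gone p_inj (flip_step_Ts hN) (triangulation_Ts (ltnW hN)) DT1).
Qed.

Lemma reachable_of_common_triangle (h : 'I_N) j X : (i < j <= h)%N -> X \in Ts j ->
  phi (fl i) \subset X -> eps (fl h) \subset X -> reachable h.
Proof.
move=> /andP[ij jh] XT iX hX; have hN := ltn_ord h; have jN := leq_trans jh (ltnW hN).
have [c [d [a [b [pc ab Ta Tb]]]]] := flip_step_new_edge (flip_step_Ts (ltn_ord i)).
move: iX; rewrite pc subUset !sub1set => /andP[cX dX].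
have [y1 [g1 o1 near1]] := exists_generic_near_edge p_inj
  (triangulation_Ts (ltn_ord i)) (triangulation_Ts jN) XT cX dX ab Ta Tb.
have iT x : phi (fl i) \subset [set c; d; x] by rewrite pc set2_sub_set3.
have tr1 : tracked y1 i.+1.
  by case: near1 => o;
    [exact: (tracked_start Ta (iT a) o) | exact: (tracked_start Tb (iT b) o)].
have wX : witnessed j X.
  by apply: (tracked_later g1 _ tr1) XT o1; rewrite ij jN.
have [a' [b' [c' [d' [ha cd Tc Td]]]]] := flip_step_old_edge (flip_step_Ts hN).
move: hX; rewrite ha subUset !sub1set => /andP[aX bX].
have [y2 [g2 o2 near2]] := exists_generic_near_edge p_inj
  (triangulation_Ts (ltnW hN)) (triangulation_Ts jN) XT aX bX cd Tc Td.
have tr2 : tracked y2 h.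
  apply: (tracked_later g2 (t0 := j)); first by rewrite jh (ltnW hN).
  by move=> D DT oD; rewrite (open_simplex_unique (triangulation_Ts jN) DT XT oD o2).
have hT x : eps (fl h) \subset [set a'; b'; x] by rewrite ha set2_sub_set3.
by case: near2 => o;
  [exact: (reachable_of_tracked tr2 Tc (hT c') o)
  |exact: (reachable_of_tracked tr2 Td (hT d') o)].
Qed.

Lemma reachable_of_edge_relation (h : 'I_N) : (i < h)%N ->
  phi (fl i) = eps (fl h) \/
    (exists j, (i < j <= h)%N /\ share_triangle (Ts j) (phi (fl i)) (eps (fl h))) ->
  reachable h.
Proof.
move=> ih [ih_eq|[j [ijh /and4P[_ _ _ /existsP[X /and3P[XT iX hX]]]]]].
  have [a [b [x [_ [ha _ Tx _]]]]] := flip_step_old_edge (flip_step_Ts (ltn_ord h)).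
  apply: (reachable_of_common_triangle (j := h) _ Tx); rewrite ?ih ?leqnn //;
    by rewrite ?ih_eq ha set2_sub_set3.
exact: reachable_of_common_triangle ijh XT iX hX.
Qed.

End Reachability.

Lemma path_in_component n (F : seq (flip n)) (Ts : nat -> {set {set 'I_n}})
  (C : {set 'I_(size F)}) (a : 'I_(size F)) (s : seq 'I_(size F)) :
  is_component F Ts C -> a \in C -> path (adj F Ts) a s -> all (mem C) s.
Proof.
case=> x0 ->; elim: s a => //= x s IH a aC /andP[ax xs].
have xC : x \in [set y | connect (wadj F Ts) x0 y].
  by move: aC; rewrite !inE => /connect_trans; apply; apply: connect1; rewrite /wadj ax.
by rewrite xC (IH x xC xs).
Qed.

Unset Implicit Arguments.

Theorem lemma6 (R : realType) (n : nat) (p : 'I_n -> 'rV[R]_2)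
  (Hp : injective p)
  (Tinit Tfinal : {set {set 'I_n}}) (k : nat)
  (F : seq (flip n)) (Ts : nat -> {set {set 'I_n}})
  (HF : normalized_solution p Tinit Tfinal k F Ts)
  (C : {set 'I_(size F)}) (HC : is_component F Ts C)
  (i h : 'I_(size F)) (Hi : i \in C) (Hh : h \in C) (Hih : (i < h)%N)
  (Hcond : phi (nth (dflip n) F i) = eps (nth (dflip n) F h) \/
           exists j, (i < j <= h)%N /\
             share_triangle (Ts j) (phi (nth (dflip n) F i))
                                   (eps (nth (dflip n) F h))) :
  exists s : seq 'I_(size F),
    [/\ path (adj F Ts) i s, last i s = h & all (fun x => x \in C) s].
Proof.
have [[F_valid _ _ _] _] := HF.
have [s [path_s last_s]] := reachable_of_edge_relation Hp F_valid Hih Hcond.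
by exists s; split => //; apply: path_in_component HC Hi path_s.
Qed.
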